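(* Let $\mathcal{M}\in\mathbb{R}^{N\times N}$ be a column-stochastic matrix ($\mathcal{M}_{i,j}\ge 0$, $\sum_{i=1}^N\mathcal{M}_{i,j}=1$ for every $j$) of an ergodic Markov chain, with eigenvectors $\mathbf{u_1},\ldots,\mathbf{u_N}$ forming a basis of $\mathbb{R}^N$ and eigenvalues $\lambda_1=1$, $|\lambda_j|<1$ for $j>1$, where $\mathbf{u_1}$ is the unique invariant probability vector ($\mathcal{M}\mathbf{u_1}=\mathbf{u_1}$, entries summing to $1$). Let $W=\operatorname{span}\{\mathbf{u_2},\ldots,\mathbf{u_N}\}$; then $1-\mathcal{M}$ maps $W$ bijectively onto $W$, and we write $(1-\mathcal{M})^{-1}$ for the inverse of its restriction to $W$ (equivalently $(1-\mathcal{M})^{-1}\mathbf{y}=\sum_{k=0}^\infty\mathcal{M}^k\mathbf{y}$ for $\mathbf{y}\in W$). Let $m\in\mathbb{R}^{N\times N}$, $m\neq 0$, satisfy $\sum_{i=1}^N m_{i,j}=0$ for all $j$ (so $m\mathbb{R}^N\subseteq W$). Define $\epsilon_+=\max\{\epsilon:\ \mathcal{M}_{i,j}+\epsilon m_{i,j}\geq 0\ \forall i,j\}$, $\epsilon_-=\min\{\epsilon:\ \mathcal{M}_{i,j}+\epsilon m_{i,j}\geq 0\ \forall i,j\}$, and $$\epsilon^*_{max}=\frac{1}{\|m\|_1\,\|(1-\mathcal{M})^{-1}\|^*_1},\qquad \|\mathcal{Q}\|^*_1=\sup_{\mathbf{v}\in W,\ \|\mathbf{v}\|_1=1}\|\mathcal{Q}\mathbf{v}\|_1,$$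 where $\|m\|_1$ is the operator norm induced by the $\ell^1$ norm. Then for every $\epsilon$ with $|\epsilon|<\epsilon^*_{max}$ and $\epsilon\in[\epsilon_-,\epsilon_+]$, the series $$\mathbf{v_1}=\mathbf{u_1}+\sum_{n=1}^\infty\epsilon^n\left((1-\mathcal{M})^{-1}m\right)^n\mathbf{u_1}$$ converges in $\ell^1$, and (assuming, as throughout, that the stochastic matrix $\mathcal{M}+\epsilon m$ has a unique invariant probability vector) $\mathbf{v_1}$ is the invariant measure of $\mathcal{M}+\epsilon m$, i.e. $(\mathcal{M}+\epsilon m)\mathbf{v_1}=\mathbf{v_1}$ with entries summing to $1$. Equivalently $\mathbf{v_1}=(1-\epsilon(1-\mathcal{M})^{-1}m)^{-1}\mathbf{u_1}$.
   Context: Column-vector convention: $\mathcal{M}_{i,j}$ is the probability of a transition from state $j$ to state $i$ in one step; probability vectors are column vectors in $\mathbb{R}^N$. For $\epsilon\in[\epsilon_-,\epsilon_+]$ the matrix $\mathcal{M}+\epsilon m$ is again column-stochastic. *)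

From HB Require Import structures.
From mathcomp Require Import all_boot all_order all_algebra.
From mathcomp Require Import all_classical all_reals all_analysis.
From mathcomp Require Import complex.
Set Implicit Arguments. Unset Strict Implicit. Unset Printing Implicit Defensive.
Import Order.TTheory GRing.Theory Num.Theory.
Local Open Scope ring_scope.
Local Open Scope classical_set_scope.

Section Defs.
Variable R : realType.

Definition l1norm (k : nat) (v : 'cV[R]_k) : R := \sum_i `|v i 0|.

Definition opnorm1 (k : nat) (A : 'M[R]_k) : R :=
  sup [set r | exists v : 'cV[R]_k, l1norm v = 1 /\ r = l1norm (A *m v)].

(* column-stochastic matrix: M i j = probability of the transition j -> i *)
Definition column_stochastic (k : nat) (M : 'M[R]_k) : Prop :=
  (forall i j, 0 <= M i j) /\ (forall j, \sum_i M i j = 1).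

Definition probvec (k : nat) (v : 'cV[R]_k) : Prop :=
  (forall i, 0 <= v i 0) /\ \sum_i v i 0 = 1.

Definition irreducible (k : nat) (M : 'M[R]_k.+1) : Prop :=
  forall i j, exists t : nat, 0 < (M ^+ t) i j.
Definition aperiodic (k : nat) (M : 'M[R]_k.+1) : Prop :=
  forall i, forall d : nat,
    (forall t : nat, (0 < t)%N -> 0 < (M ^+ t) i i -> (d %| t)%N) -> d = 1%N.
Definition ergodic (k : nat) (M : 'M[R]_k.+1) : Prop :=
  irreducible M /\ aperiodic M.

Definition mxC (p q : nat) (A : 'M[R]_(p, q)) : 'M[R[i]]_(p, q) :=
  map_mx (fun x => (x%:C)%C) A.

Definition eigenbasis (k : nat) (M : 'M[R]_k) (U : 'M[R[i]]_k)
    (lam : 'rV[R[i]]_k) : Prop :=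
  U \in unitmx /\ mxC M *m U = U *m diag_mx lam.

(* W = span{u_2,...,u_N} (inside R^N): the real vectors which are
   combinations of the columns 2..N of U *)
Definition Wspan (k : nat) (U : 'M[R[i]]_k.+1) : set 'cV[R]_k.+1 :=
  [set v | exists c : 'cV[R[i]]_k.+1, c ord0 0 = 0 /\ mxC v = U *m c].

(* (1 - M)^{-1} : inverse of the restriction of 1 - M to W *)
Definition resW (k : nat) (M : 'M[R]_k.+1) (U : 'M[R[i]]_k.+1)
    (y : 'cV[R]_k.+1) : 'cV[R]_k.+1 :=
  xget 0 [set x | Wspan U x /\ (1%:M - M) *m x = y].

Definition normW (k : nat) (U : 'M[R[i]]_k.+1)
    (Q : 'cV[R]_k.+1 -> 'cV[R]_k.+1) : R :=
  sup [set r | exists v, Wspan U v /\ l1norm v = 1 /\ r = l1norm (Q v)].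

Definition admissible_eps (k : nat) (M m : 'M[R]_k) : set R :=
  [set e | forall i j, 0 <= M i j + e * m i j].
Definition eps_plus (k : nat) (M m : 'M[R]_k) : R := sup (admissible_eps M m).
Definition eps_minus (k : nat) (M m : 'M[R]_k) : R := inf (admissible_eps M m).

Definition eps_star (k : nat) (M : 'M[R]_k.+1) (U : 'M[R[i]]_k.+1)
    (m : 'M[R]_k.+1) : R :=
  1 / (opnorm1 m * normW U (resW M U)).

Definition Qop (k : nat) (M : 'M[R]_k.+1) (U : 'M[R[i]]_k.+1)
    (m : 'M[R]_k.+1) (v : 'cV[R]_k.+1) : 'cV[R]_k.+1 :=
  resW M U (m *m v).

Definition pert_partial (k : nat) (M : 'M[R]_k.+1) (U : 'M[R[i]]_k.+1)
    (m : 'M[R]_k.+1) (eps : R) (u1 : 'cV[R]_k.+1) (K : nat) : 'cV[R]_k.+1 :=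
  \sum_(t < K) eps ^+ t *: iter t (Qop M U m) u1.

End Defs.

From HB Require Import structures.
From mathcomp Require Import all_boot all_order all_algebra.
From mathcomp Require Import all_classical all_reals all_analysis.
From mathcomp Require Import complex.
Import Order.TTheory GRing.Theory Num.Theory.
Local Open Scope ring_scope.
Local Open Scope classical_set_scope.

(* Since the columns of M sum to 1 and 1 is a simple eigenvalue of M, W is the
   hyperplane of vectors of mass zero, and D = 1 - M + u1 1^T is invertible
   with D^-1 = (1 - M)^-1 on W.  Hence (1 - M)^-1 m is the matrix D^-1 m, of
   l^1 operator norm at most ||m||_1 ||(1 - M)^-1||^*_1, so for
   |eps| < eps*_max the matrix eps D^-1 m is a contraction and the series is the
   Neumann series of (1 - eps D^-1 m)^-1 u1.  Applying D to
   v1 - eps D^-1 m v1 = u1 gives D v1 - eps m v1 = u1: taking masses yields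
   mass v1 = 1, and then the equation reduces to (M + eps m) v1 = v1. *)

Definition mass {T : pzRingType} {k : nat} (v : 'cV[T]_k) : T := \sum_i v i 0.

Section Mass.
Context {T : pzRingType} {k : nat}.
Implicit Types (v w : 'cV[T]_k) (A : 'M[T]_k).

Lemma massD v w : mass (v + w) = mass v + mass w.
Proof. by rewrite /mass -big_split; apply: eq_bigr => i _; rewrite mxE. Qed.

Lemma massN v : mass (- v) = - mass v.
Proof. by rewrite /mass -sumrN; apply: eq_bigr => i _; rewrite mxE. Qed.

Lemma massB v w : mass (v - w) = mass v - mass w.
Proof. by rewrite massD massN. Qed.

Lemma massZ a v : mass (a *: v) = a * mass v.
Proof. by rewrite /mass mulr_sumr; apply: eq_bigr => i _; rewrite mxE. Qed.

Lemma mass_mulmx A v : mass (A *m v) = \sum_j (\sum_i A i j) * v j 0.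
Proof.
rewrite /mass; under eq_bigr do rewrite mxE.
by rewrite exchange_big; apply: eq_bigr => j _; rewrite mulr_suml.
Qed.

Lemma mass_mulmx_colsum A c v :
  (forall j, \sum_i A i j = c) -> mass (A *m v) = c * mass v.
Proof.
move=> colA; rewrite mass_mulmx /mass mulr_sumr.
by apply: eq_bigr => j _; rewrite colA.
Qed.

End Mass.

Lemma mass_mxC (R : realType) (k : nat) (v : 'cV[R]_k) :
  mass (mxC v) = (mass v)%:C%C.
Proof. by rewrite /mass rmorph_sum; apply: eq_bigr => i _; rewrite mxE. Qed.

Lemma sup_ge0 (R : realType) (E : set R) : (forall x, E x -> 0 <= x) -> 0 <= sup E.
Proof.
move=> E_ge0; have [[[x Ex] ubE]|noE] := pselect (has_sup E); last by rewrite sup_out.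
exact: le_trans (E_ge0 x Ex) (ub_le_sup ubE Ex).
Qed.

Section L1Norm.
Context {R : realType} {k : nat}.
Implicit Types (v : 'cV[R]_k) (A : 'M[R]_k) (D : set 'cV[R]_k).

Lemma l1norm_ge0 v : 0 <= l1norm v.
Proof. exact: sumr_ge0. Qed.

Lemma l1norm_eq0 v : l1norm v = 0 -> v = 0.
Proof.
move=> /eqP; rewrite psumr_eq0 // => /allP v0; apply/matrixP => i j.
by rewrite (ord1 j) mxE; apply/eqP; rewrite -normr_eq0; apply: (implyP (v0 i _)).
Qed.

Lemma l1normZ a v : l1norm (a *: v) = `|a| * l1norm v.
Proof. by rewrite /l1norm mulr_sumr; apply: eq_bigr => i _; rewrite mxE normrM. Qed.

Lemma l1normN v : l1norm (- v) = l1norm v.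
Proof. by rewrite -scaleN1r l1normZ normrN normr1 mul1r. Qed.

Lemma l1norm_mulmx_bounded A : exists C, forall v, l1norm (A *m v) <= C * l1norm v.
Proof.
exists (\sum_i \sum_j `|A i j|) => v; rewrite /l1norm mulr_sumr.
apply: (@le_trans _ _ (\sum_i \sum_j `|A i j| * `|v j 0|)).
  apply: ler_sum => i _; rewrite mxE; apply: le_trans (ler_norm_sum _ _ _) _.
  by apply: ler_sum => j _; rewrite normrM.
rewrite exchange_big /=; apply: ler_sum => j _; rewrite -mulr_suml.
apply: ler_wpM2r => //; apply: ler_sum => i _.
by rewrite (bigD1 j) //= lerDl sumr_ge0.
Qed.

(* [normW U Q] is convertible to [l1sup (Wspan U) (fun v => l1norm (Q v))]. *)
Definition l1sup D (f : 'cV[R]_k -> R) : R :=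
  sup [set r | exists w, D w /\ l1norm w = 1 /\ r = f w].

Lemma l1sup_ge0 D f : (forall v, 0 <= f v) -> 0 <= l1sup D f.
Proof. by move=> f_ge0; apply: sup_ge0 => r [w [_ [_ ->]]]. Qed.

Lemma le_l1sup D f :
  (forall a v, D v -> D (a *: v)) ->
  (forall a v, D v -> f (a *: v) = `|a| * f v) ->
  (exists C, forall v, D v -> f v <= C * l1norm v) ->
  forall v, D v -> f v <= l1sup D f * l1norm v.
Proof.
move=> D_scale f_hom [C f_le] v Dv.
have ub : has_ubound [set r | exists w, D w /\ l1norm w = 1 /\ r = f w].
  by exists C => r [w [Dw [w1 ->]]]; rewrite -[C]mulr1 -w1 f_le.
have [v0|nz_v] := eqVneq v 0.
  by rewrite v0 -(scale0r v) f_hom // normr0 !mul0r l1normZ normr0 mul0r mulr0.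
have v_gt0 : 0 < l1norm v.
  by rewrite lt_def l1norm_ge0 andbT; apply: contra_neq nz_v => /l1norm_eq0.
have nv_gt0 : 0 < (l1norm v)^-1 by rewrite invr_gt0.
rewrite -ler_pdivrMr // mulrC -[X in X * _ <= _](ger0_norm (ltW nv_gt0)) -f_hom //.
rewrite /l1sup; apply: (ub_le_sup ub).
exists ((l1norm v)^-1 *: v); do !split; first exact: D_scale.
by rewrite l1normZ (ger0_norm (ltW nv_gt0)) mulVf ?gt_eqF.
Qed.

Lemma opnorm1E A : opnorm1 A = l1sup setT (fun v => l1norm (A *m v)).
Proof.
rewrite /opnorm1 /l1sup; congr sup; apply/seteqP; split=> r.
  by move=> [w [w1 ->]]; exists w.
by move=> [w [_ [w1 ->]]]; exists w.
Qed.

Lemma opnorm1_ge0 A : 0 <= opnorm1 A.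
Proof. by rewrite opnorm1E; apply: l1sup_ge0 => v; apply: l1norm_ge0. Qed.

Lemma l1norm_mulmx_le A v : l1norm (A *m v) <= opnorm1 A * l1norm v.
Proof.
have [C A_le] := l1norm_mulmx_bounded A.
rewrite opnorm1E; apply: (@le_l1sup setT (fun w => l1norm (A *m w))) => //.
  by move=> a w _; rewrite -scalemxAr l1normZ.
by exists C => w _; apply: A_le.
Qed.

End L1Norm.

Lemma normW_ge0 (R : realType) (k : nat) (U : 'M[R[i]]_k.+1)
    (Q : 'cV[R]_k.+1 -> 'cV[R]_k.+1) :
  0 <= normW U Q.
Proof. by apply: l1sup_ge0 => v; apply: l1norm_ge0. Qed.

Lemma ker0_unitmx (F : fieldType) (k : nat) (A : 'M[F]_k) :
  (forall x : 'cV_k, A *m x = 0 -> x = 0) -> A \in unitmx.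
Proof.
move=> kerA; rewrite -row_full_unit -cokermx_eq0; apply/eqP/matrixP => i j.
have := kerA (cokermx A *m delta_mx j 0).
rewrite mulmxA mulmx_coker mul0mx => /(_ erefl) /matrixP /(_ i 0).
by rewrite -colE !mxE.
Qed.

Lemma neumann_partial_sum {T : pzRingType} {k : nat} {A : 'M[T]_k}
    {u v : 'cV[T]_k} :
  v - A *m v = u -> forall K, \sum_(t < K) A ^+ t *m u = v - A ^+ K *m v.
Proof.
move=> <-; elim => [|K IH]; first by rewrite big_ord0 expr0 mul1mx subrr.
rewrite big_ord_recr /= IH mulmxBr mulmxA -[A ^+ K *m A]/(A ^+ K * A) -exprSr.
by rewrite addrA subrK.
Qed.

Section Contraction.
Context {R : realType} {k : nat} {T : 'M[R]_k} {q : R}.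
Hypotheses (q_ge0 : 0 <= q) (q_lt1 : q < 1).
Hypothesis T_contr : forall v, l1norm (T *m v) <= q * l1norm v.

Lemma l1norm_pow_mulmx_le K v : l1norm (T ^+ K *m v) <= q ^+ K * l1norm v.
Proof.
elim: K v => [|K IH] v; first by rewrite expr0 mul1r mul1mx.
rewrite exprS -mulmxA exprS -mulrA.
exact: le_trans (T_contr _) (ler_wpM2l q_ge0 (IH v)).
Qed.

Lemma contraction_unitmx : 1%:M - T \in unitmx.
Proof.
apply: ker0_unitmx => x; rewrite mulmxBl mul1mx => /eqP.
rewrite subr_eq0 => /eqP Tx.
have : (1 - q) * l1norm x <= 0.
  by rewrite mulrBl mul1r subr_le0 {1}Tx T_contr.
rewrite pmulr_rle0 ?subr_gt0 // => x_le0.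
by apply: l1norm_eq0; apply/eqP; rewrite eq_le x_le0 l1norm_ge0.
Qed.

Lemma neumann_cvg u :
  (fun K => l1norm (\sum_(t < K) T ^+ t *m u - invmx (1%:M - T) *m u)) @ \oo --> 0.
Proof.
set v := invmx (1%:M - T) *m u.
have fixv : v - T *m v = u.
  by rewrite -[v in v - _]mul1mx -mulmxBl mulKVmx // contraction_unitmx.
apply: (@squeeze_cvgr _ _ _ _ (fun _ => 0) (fun K => q ^+ K * l1norm v)).
- apply: nearW => K; rewrite (neumann_partial_sum fixv) addrAC subrr add0r l1normN.
  by rewrite l1norm_ge0 l1norm_pow_mulmx_le.
- exact: (cvg_cst (0 : R^o)).
- rewrite -(mul0r (l1norm v)); apply: cvgM; last exact: (cvg_cst (l1norm v : R^o)).
  by apply: cvg_expr; rewrite ger0_norm.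
Qed.

End Contraction.

Section Perturbation.
Context {R : realType} {n : nat} {M : 'M[R]_n.+1} {U : 'M[R[i]]_n.+1}
  {lam : 'rV[R[i]]_n.+1} {u1 : 'cV[R]_n.+1}.
Hypotheses (M_stoch : column_stochastic M) (M_eigen : eigenbasis M U lam).
Hypothesis lam_lt1 : forall j : 'I_n.+1, j != ord0 -> `|lam ord0 j| < 1.
Hypotheses (U_col0 : col ord0 U = mxC u1) (mass_u1 : mass u1 = 1).
Hypothesis M_u1 : M *m u1 = u1.

Lemma lam_neq1 {j : 'I_n.+1} : j != ord0 -> lam ord0 j != 1.
Proof. by move=> /lam_lt1; apply: contraTneq => ->; rewrite normr1 ltxx. Qed.

Lemma mass_stochastic_mulmx x : mass (M *m x) = mass x.
Proof. by rewrite (mass_mulmx_colsum _ _ x M_stoch.2) mul1r. Qed.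

Lemma colsum_U j : \sum_i U i j = (j == ord0)%:R.
Proof.
have -> : \sum_i U i j = mass (col j U) by apply: eq_bigr => i _; rewrite mxE.
have [-> | j_neq0] := eqVneq j ord0; first by rewrite U_col0 mass_mxC mass_u1.
have MC_colsum l : \sum_i mxC M i l = 1.
  by under eq_bigr do rewrite mxE; rewrite -rmorph_sum M_stoch.2.
have col_lam : col j (U *m diag_mx lam) = lam ord0 j *: col j U.
  by apply/matrixP => i l; rewrite mul_mx_diag !mxE mulrC.
have := congr1 (mass \o col j) M_eigen.2; rewrite /= col_lam [col j _]colE -mulmxA.
rewrite -colE (mass_mulmx_colsum _ _ _ MC_colsum) mul1r massZ => /eqP.
rewrite -subr_eq0 -{1}[mass _]mul1r -mulrBl mulf_eq0 subr_eq0 eq_sym.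
by rewrite (negPf (lam_neq1 j_neq0)) => /eqP.
Qed.

Lemma mass_U_mulmx (c : 'cV[R[i]]_n.+1) : mass (U *m c) = c ord0 0.
Proof.
rewrite mass_mulmx (bigD1 ord0) //= [X in _ + X]big1 => [|j j_neq0].
  by rewrite colsum_U eqxx mul1r addr0.
by rewrite colsum_U (negPf j_neq0) mul0r.
Qed.

Lemma Wspan_mass0 v : Wspan U v <-> mass v = 0.
Proof.
split=> [[c [c0 Uc]] | v0].
  by apply: (@complexI R); rewrite -mass_mxC Uc mass_U_mulmx c0.
exists (invmx U *m mxC v); split; last by rewrite mulKVmx // M_eigen.1.
by rewrite -mass_U_mulmx mulKVmx ?M_eigen.1 // mass_mxC v0.
Qed.

Lemma Wspan_fixed_eq0 x : Wspan U x -> M *m x = x -> x = 0.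
Proof.
move=> [c [c0 Uc]] Mx.
have Uc_eq : U *m (diag_mx lam *m c) = U *m c.
  by rewrite mulmxA -M_eigen.2 -mulmxA -Uc -map_mxM Mx.
have{Uc_eq} lam_c : diag_mx lam *m c = c.
  by rewrite -[LHS](mulKmx M_eigen.1) Uc_eq mulKmx // M_eigen.1.
have c_eq0 : c = 0.
  apply/matrixP => j l; rewrite (ord1 l) mxE.
  have [-> //|j_neq0] := eqVneq j ord0.
  move/matrixP: lam_c => /(_ j 0) /eqP; rewrite mul_diag_mx mxE.
  rewrite -subr_eq0 -{2}[c j 0]mul1r -mulrBl mulf_eq0 subr_eq0.
  by rewrite (negPf (lam_neq1 j_neq0)) => /eqP.
apply/matrixP => i l; move/matrixP: Uc => /(_ i l).
by rewrite c_eq0 mulmx0 !mxE => /(@complexI R).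
Qed.

(* Rank-one deflation of [1 - M]; its inverse is the fundamental matrix of the
   chain, which agrees with [(1 - M)^-1] on [W]. *)
Definition deflated : 'M[R]_n.+1 := 1%:M - M + u1 *m const_mx 1.

Lemma deflated_mulmx x : deflated *m x = x - M *m x + mass x *: u1.
Proof.
rewrite /deflated mulmxDl mulmxBl mul1mx -mulmxA; congr (_ + _).
have -> : const_mx 1 *m x = (mass x)%:M.
  apply/matrixP => a b; rewrite !ord1 !mxE /= mulr1n.
  by apply: eq_bigr => i _; rewrite mxE mul1r.
by rewrite mul_mx_scalar.
Qed.

Lemma mass_deflated_mulmx x : mass (deflated *m x) = mass x.
Proof.
rewrite deflated_mulmx massD massB mass_stochastic_mulmx subrr add0r.
by rewrite massZ mass_u1 mulr1.
Qed.

Lemma deflated_u1 : deflated *m u1 = u1.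
Proof. by rewrite deflated_mulmx M_u1 mass_u1 scale1r subrr add0r. Qed.

Lemma deflated_unitmx : deflated \in unitmx.
Proof.
apply: ker0_unitmx => x Dx.
have x0 : mass x = 0.
  by rewrite -mass_deflated_mulmx Dx /mass big1 // => i _; rewrite mxE.
apply: Wspan_fixed_eq0; first exact/Wspan_mass0.
by apply/eqP; rewrite eq_sym -subr_eq0 -Dx deflated_mulmx x0 scale0r addr0.
Qed.

Lemma resW_invmx y : mass y = 0 -> resW M U y = invmx deflated *m y.
Proof.
have D_unit := deflated_unitmx.
have D_W x : mass x = 0 -> deflated *m x = (1%:M - M) *m x.
  by move=> x0; rewrite deflated_mulmx x0 scale0r addr0 mulmxBl mul1mx.
move=> y0; have Dy0 : mass (invmx deflated *m y) = 0.
  by rewrite -mass_deflated_mulmx mulKVmx.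
apply: xget_unique; first by split; [exact/Wspan_mass0 | rewrite -D_W // mulKVmx].
by move=> x [/Wspan_mass0 x0 <-]; rewrite -D_W // mulKmx.
Qed.

Lemma l1norm_resW_le y :
  Wspan U y -> l1norm (resW M U y) <= normW U (resW M U) * l1norm y.
Proof.
have W_scale a v : Wspan U v -> Wspan U (a *: v).
  by move=> /Wspan_mass0 v0; apply/Wspan_mass0; rewrite massZ v0 mulr0.
apply: le_l1sup => // [a v /Wspan_mass0 v0 | ].
  by rewrite !resW_invmx ?massZ ?v0 ?mulr0 // -scalemxAr l1normZ.
have [C DC] := l1norm_mulmx_bounded (invmx deflated).
by exists C => v /Wspan_mass0 v0; rewrite resW_invmx.
Qed.

Context {m : 'M[R]_n.+1}.
Hypothesis m_colsum0 : forall j, \sum_i m i j = 0.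

Definition Qmx : 'M[R]_n.+1 := invmx deflated *m m.

Lemma mass_m_mulmx v : mass (m *m v) = 0.
Proof. by rewrite (mass_mulmx_colsum _ _ v m_colsum0) mul0r. Qed.

Lemma Qop_mx v : Qop M U m v = Qmx *m v.
Proof. by rewrite /Qop resW_invmx ?mass_m_mulmx // mulmxA. Qed.

Lemma l1norm_Qmx_le v :
  l1norm (Qmx *m v) <= opnorm1 m * normW U (resW M U) * l1norm v.
Proof.
have W_mv : Wspan U (m *m v) by apply/Wspan_mass0/mass_m_mulmx.
rewrite -Qop_mx; apply: le_trans (l1norm_resW_le _ W_mv) _.
by rewrite [opnorm1 m * _]mulrC -mulrA ler_wpM2l ?normW_ge0 ?l1norm_mulmx_le.
Qed.

Lemma iter_Qop t v : iter t (Qop M U m) v = Qmx ^+ t *m v.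
Proof.
elim: t => [|t IH] /=; first by rewrite mul1mx.
by rewrite IH Qop_mx mulmxA -[Qmx *m _]/(Qmx * _) -exprS.
Qed.

Lemma pert_partialE eps K :
  pert_partial M U m eps u1 K = \sum_(t < K) (eps *: Qmx) ^+ t *m u1.
Proof. by apply: eq_bigr => t _; rewrite exprZn -scalemxAl iter_Qop. Qed.

Lemma perturbed_fixpoint_invariant eps x :
  x - eps *: Qop M U m x = u1 -> mass x = 1 /\ (M + eps *: m) *m x = x.
Proof.
rewrite Qop_mx => fix_x.
have Dfix : deflated *m x - eps *: (m *m x) = u1.
  rewrite -deflated_u1 -fix_x mulmxBr -scalemxAr /Qmx !mulmxA.
  by rewrite mulmxV ?mul1mx // deflated_unitmx.
have x1 : mass x = 1.
  by rewrite -mass_u1 -Dfix massB massZ mass_m_mulmx mulr0 subr0 mass_deflated_mulmx.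
split=> //; move: Dfix; rewrite deflated_mulmx x1 scale1r addrAC -[RHS]add0r.
move=> /addIr /eqP; rewrite -addrA -opprD subr_eq0 mulmxDl -scalemxAl.
by move=> /eqP/esym.
Qed.

Theorem perturbed_invariant_measure eps :
  `|eps| * (opnorm1 m * normW U (resW M U)) < 1 ->
  exists v1 : 'cV[R]_n.+1,
    (fun K => l1norm (pert_partial M U m eps u1 K - v1)) @ \oo --> 0
    /\ (M + eps *: m) *m v1 = v1
    /\ \sum_i v1 i 0 = 1
    /\ v1 - eps *: Qop M U m v1 = u1
    /\ (forall x, x - eps *: Qop M U m x = u1 -> x = v1).
Proof.
set q := `|eps| * _ => q_lt1; set T := eps *: Qmx.
have q_ge0 : 0 <= q by rewrite !mulr_ge0 ?opnorm1_ge0 ?normW_ge0.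
have T_contr v : l1norm (T *m v) <= q * l1norm v.
  by rewrite -scalemxAl l1normZ -mulrA ler_wpM2l // l1norm_Qmx_le.
have T_unit := contraction_unitmx q_lt1 T_contr.
have QopT x : x - eps *: Qop M U m x = (1%:M - T) *m x.
  by rewrite Qop_mx mulmxBl mul1mx scalemxAl.
set v1 := invmx (1%:M - T) *m u1.
have fix_v1 : v1 - eps *: Qop M U m v1 = u1 by rewrite QopT mulKVmx.
have [mass_v1 inv_v1] := perturbed_fixpoint_invariant _ _ fix_v1.
have -> : pert_partial M U m eps u1 = fun K => \sum_(t < K) T ^+ t *m u1.
  by apply/funext => K; apply: pert_partialE.
exists v1; split; first exact: (neumann_cvg q_ge0 q_lt1 T_contr).
do 3!split=> //.
by move=> x; rewrite QopT /v1 => <-; rewrite mulKmx.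
Qed.

End Perturbation.

Theorem mainTheorem2 (R : realType) (n : nat)
    (M : 'M[R]_n.+1) (U : 'M[R[i]]_n.+1) (lam : 'rV[R[i]]_n.+1)
    (u1 : 'cV[R]_n.+1) (m : 'M[R]_n.+1) (eps : R) :
  column_stochastic M ->
  ergodic M ->
  eigenbasis M U lam ->
  lam ord0 ord0 = 1 ->
  (forall j : 'I_n.+1, j != ord0 -> `|lam ord0 j| < 1) ->
  col ord0 U = mxC u1 ->
  probvec u1 -> M *m u1 = u1 ->
  (forall p, probvec p -> M *m p = p -> p = u1) ->
  m != 0 ->
  (forall j, \sum_i m i j = 0) ->
  `|eps| < eps_star M U m ->
  eps_minus M m <= eps <= eps_plus M m ->
  (exists! p, probvec p /\ (M + eps *: m) *m p = p) ->
  exists v1 : 'cV[R]_n.+1,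
    (fun K => l1norm (pert_partial M U m eps u1 K - v1)) @ \oo --> 0
    /\ (M + eps *: m) *m v1 = v1
    /\ \sum_i v1 i 0 = 1
    /\ v1 - eps *: Qop M U m v1 = u1
    /\ (forall x, x - eps *: Qop M U m x = u1 -> x = v1).
Proof.
move=> M_stoch _ M_eigen _ lam_lt1 U_col0 [_ mass_u1] M_u1 _ _ m_colsum0 eps_lt _ _.
apply: (perturbed_invariant_measure M_stoch M_eigen lam_lt1 U_col0 mass_u1 M_u1
  m_colsum0).
move: eps_lt; rewrite /eps_star mul1r; set p := opnorm1 m * _ => eps_lt.
have p_ge0 : 0 <= p by rewrite mulr_ge0 ?opnorm1_ge0 ?normW_ge0.
have [p0|p_neq0] := eqVneq p 0.
  by move: eps_lt; rewrite p0 invr0 ltNge normr_ge0.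
by rewrite -ltr_pdivlMr ?div1r // lt_def p_neq0.
Qed.
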